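(* Let $P$ be a causal stable system on $\mathcal{L}_{2e+}^n$ and let $\nu_k,\rho_k>0$ with $\nu_k\rho_k\le1/4$ for $k=1,2,\dots$. Suppose that for every sequence $(\tau_k)_{k\ge1}$ with $\tau_k\ge0$ and $\sum_{k=1}^\infty\tau_k=1$, $$\langle u,Pu\rangle\ge\Big(\sum_{k=1}^\infty\tau_k\nu_k\Big)\|u\|_2^2+\Big(\sum_{k=1}^\infty\tau_k\rho_k\Big)\|Pu\|_2^2\quad\forall u\in\mathcal{L}_{2+}.$$ Then $\theta(P)\le\arccos\big(2\sqrt{\sup_k\nu_k\rho_k}\big)$.
   Context: For $n\ge1$, $\mathcal{L}_2^n$ is the set of measurable $u:\mathbb{R}\to\mathbb{R}^n$ with $\|u\|_2^2=\int|u(t)|^2dt<\infty$, inner product $\langle u,v\rangle=\int u(t)^Tv(t)\,dt$; $\mathcal{L}_{2+}=\{u\in\mathcal{L}_2:u(t)=0\ \text{for}\ t<0\}$. For $T\ge0$, $(\Gamma_Tu)(t)=u(t)$ for $t\le T$, $0$ for $t>T$; $\mathcal{L}_{2e+}=\{u:\Gamma_Tu\in\mathcal{L}_{2+}\ \forall T\ge0\}$. A system is an operator $P:\mathcal{L}_{2e+}\to\mathcal{L}_{2e+}$ with $P0=0$, $P\ne0$; causal if $\Gamma_TP=\Gamma_TP\Gamma_T$ for all $T\ge0$; a causal system is stable if $Pu\in\mathcal{L}_{2+}$ for all $u\in\mathcal{L}_{2+}$ and $\sup_{0\ne u\in\mathcal{L}_{2+}}\|Pu\|_2/\|u\|_2<\infty$.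 The singular angle $\theta(P)\in[0,\pi]$ is given by $\cos\theta(P)=\inf\{\langle u,Pu\rangle/(\|u\|_2\|Pu\|_2):0\neq u\in\mathcal{L}_{2+},\ Pu\ne0\}$. *)

From HB Require Import structures.
From mathcomp Require Import all_boot all_order all_algebra.
From mathcomp Require Import all_classical all_reals all_analysis.
Set Implicit Arguments. Unset Strict Implicit. Unset Printing Implicit Defensive.
Import Order.TTheory GRing.Theory Num.Theory.
Import numFieldNormedType.Exports.
Local Open Scope classical_set_scope.
Local Open Scope ring_scope.

Section Defs.
Variables (R : realType) (n : nat).

Definition signal := R -> 'rV[R]_n.

Definition mu := (@lebesgue_measure R).

Definition vdot (x y : 'rV[R]_n) : R := \sum_(i < n) x ord0 i * y ord0 i.
Definition vsqnorm (x : 'rV[R]_n) : R := vdot x x.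

(* equality almost everywhere (elements of L2 are classes of functions) *)
Definition ae_eq (f g : signal) : Prop := mu.-negligible [set t | f t != g t].

Definition L2 (u : signal) : Prop :=
  (forall i : 'I_n, measurable_fun setT (fun t => u t ord0 i)) /\
  (\int[mu]_t (vsqnorm (u t))%:E < +oo)%E.

Definition L2p (u : signal) : Prop :=
  L2 u /\ mu.-negligible [set t | t < 0 /\ u t != 0].

Definition ip (u v : signal) : R := \int[mu]_(t in setT) vdot (u t) (v t).
Definition norm2 (u : signal) : R := Num.sqrt (\int[mu]_(t in setT) vsqnorm (u t)).

Definition trunc (T : R) (u : signal) : signal :=
  fun t => if t <= T then u t else 0.

Definition L2ep (u : signal) : Prop := forall T, 0 <= T -> L2p (trunc T u).

Definition is_system (P : signal -> signal) : Prop :=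
  [/\ forall u, L2ep u -> L2ep (P u),
      forall u v, L2ep u -> ae_eq u v -> ae_eq (P u) (P v),
      ae_eq (P (fun _ => 0)) (fun _ => 0) &
      exists u, L2ep u /\ ~ ae_eq (P u) (fun _ => 0)].

Definition causal (P : signal -> signal) : Prop :=
  is_system P /\
  forall u, L2ep u -> forall T, 0 <= T ->
    ae_eq (trunc T (P u)) (trunc T (P (trunc T u))).

Definition stable (P : signal -> signal) : Prop :=
  causal P /\ (forall u, L2p u -> L2p (P u)) /\
  exists c : R, forall u, L2p u -> norm2 u != 0 -> norm2 (P u) / norm2 u <= c.

Definition cos_singular_angle (P : signal -> signal) : R :=
  inf [set ip u (P u) / (norm2 u * norm2 (P u)) |
       u in [set u | L2p u /\ norm2 u != 0 /\ norm2 (P u) != 0]].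

Definition singular_angle (P : signal -> signal) : R := acos (cos_singular_angle P).

End Defs.

From Pilot Require Import Defs.
From HB Require Import structures.
From mathcomp Require Import all_boot all_order all_algebra.
From mathcomp Require Import all_classical all_reals all_analysis.
Import Order.TTheory GRing.Theory Num.Theory.
Import numFieldNormedType.Exports.
Local Open Scope classical_set_scope.
Local Open Scope ring_scope.

(* Taking for tau the indicator of a single index k turns the hypothesis into
   <u, Pu> >= nu_k ||u||^2 + rho_k ||Pu||^2, and by AM-GM the right-hand side is
   at least 2 sqrt(nu_k rho_k) ||u|| ||Pu||.  Every quotient in the definition of
   cos theta(P) is therefore at least 2 sqrt(nu_k rho_k), hence so is their
   infimum, and so is 2 sqrt(sup_k nu_k rho_k); arccos being decreasing gives the
   bound.  The infimum is over a nonempty set because P <> 0 and P is causal. *)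

Lemma series_indicator (R : realType) (g : nat -> R) k :
  series (fun j => (j == k)%:R * g j) @ \oo --> g k.
Proof.
apply: cvg_near_cst; near=> N.
rewrite /series /= (eq_bigr (fun j => if j == k then g j else 0)); last first.
  by move=> j _; case: eqP => _; rewrite ?mul1r ?mul0r.
rewrite -big_mkcond big_nat1_eq /=.
suff -> : (k < N)%N by [].
by near: N; exists k.+1.
Unshelve. all: by end_near.
Qed.

Lemma sqrtM_AMGM (R : rcfType) (x y a b : R) : 0 <= x -> 0 <= y ->
  2 * Num.sqrt (x * y) * (a * b) <= x * a ^+ 2 + y * b ^+ 2.
Proof.
move=> x_ge0 y_ge0.
have := (leif_mean_square_scaled (Num.sqrt x * a) (Num.sqrt y * b)).1.
by rewrite !exprMn !sqr_sqrtr // sqrtrM // mulr_natl mulrnAl mulrACA.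
Qed.

Lemma sqrt_sup_le (R : realType) (E : set R) (c : R) : E !=set0 ->
  (forall x, E x -> Num.sqrt x <= c) -> Num.sqrt (sup E) <= c.
Proof.
move=> [e Ee] sqrtE; have c0 : 0 <= c := le_trans (sqrtr_ge0 e) (sqrtE _ Ee).
rewrite -(ger0_norm c0) -sqrtr_sqr ler_sqrt ?sqr_ge0 //.
apply: ge_sup; first by exists e.
move=> x Ex; have [x_le0|x_gt0] := leP x 0; first exact: le_trans x_le0 (sqr_ge0 _).
by rewrite -(sqr_sqrtr (ltW x_gt0)) lerXn2r ?nnegrE ?sqrtr_ge0 ?sqrtE.
Qed.

Lemma acos_gt1 (R : realType) (x : R) : 1 < x -> acos x = 0.
Proof.
move=> x1; rewrite unlock /acos; case: xgetP => //= y _ [_ cy].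
by move: (cos_le1 y); rewrite cy leNgt x1.
Qed.

Lemma acos_antitone (R : realType) (x y : R) :
  -1 <= x -> x <= y -> acos y <= acos x.
Proof.
move=> x_ge xy; have [y1|y_gt1] := leP y 1; last first.
  rewrite acos_gt1 //; have [x1|x_gt1] := leP x 1; last by rewrite acos_gt1.
  by rewrite acos_ge0 // x_ge.
have x1 := le_trans xy y1; have y_ge := le_trans x_ge xy.
have acos_in (z : R) : -1 <= z <= 1 -> acos z \in `[0, pi].
  by move=> zI; rewrite in_itv /= acos_ge0 ?acos_lepi.
rewrite leNgt -ltr_cos ?acos_in ?x_ge ?y_ge //.
by rewrite !acosK ?in_itv /= ?x_ge ?y_ge // -leNgt.
Qed.

Section Signals.
Context {R : realType} {n : nat}.
Implicit Types (x : 'rV[R]_n) (u v w : signal R n).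

Lemma vsqnorm_ge0 x : 0 <= vsqnorm x.
Proof. by apply: sumr_ge0 => i _; rewrite -expr2 sqr_ge0. Qed.

Lemma vsqnorm_eq0 x : vsqnorm x = 0 -> x = 0.
Proof.
move=> /psumr_eq0P sq_eq0; apply/rowP => i; rewrite mxE.
have /eqP : x ord0 i * x ord0 i = 0.
  by apply: sq_eq0 => // j _; rewrite -expr2 sqr_ge0.
by rewrite mulf_eq0 orbb => /eqP.
Qed.

Lemma measurable_vsqnorm u :
  (forall i, measurable_fun setT (fun t => u t ord0 i)) ->
  measurable_fun setT (fun t => vsqnorm (u t)).
Proof.
by move=> u_meas; apply: measurable_sum => i; exact: measurable_realfun.measurable_funM.
Qed.

Lemma norm2_eq0_ae u : L2 u -> norm2 u = 0 -> Defs.ae_eq u (fun _ => 0).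
Proof.
move=> [u_meas u_fin] /eqP; rewrite sqrtr_eq0 => int_le0.
set E := (\int[@mu R]_t (vsqnorm (u t))%:E)%E in u_fin int_le0.
have E_ge0 : (0 <= E)%E by apply: integral_ge0 => t _; rewrite lee_fin vsqnorm_ge0.
have E0 : E = 0%E.
  rewrite -(@fineK _ E) ?ge0_fin_numE //; congr (_%:E).
  by apply/le_anti; rewrite int_le0 fine_ge0.
have : (\int[@mu R]_(t in setT) `|(vsqnorm (u t))%:E|)%E = 0%E.
  rewrite -E0; apply: eq_integral => t _.
  by rewrite gee0_abs // lee_fin vsqnorm_ge0.
move/ae_eq_integral_abs => /(_ measurableT) [|N [mN N0 sub]].
  by apply/measurable_realfun.measurable_EFinP; exact: measurable_vsqnorm.
exists N; split => // t /= ut_neq0; apply: sub => /= /(_ I) [] /vsqnorm_eq0 ut0.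
by rewrite ut0 eqxx in ut_neq0.
Qed.

Lemma ae_eq_sym {u v} : Defs.ae_eq u v -> Defs.ae_eq v u.
Proof. by apply: negligibleS => t /=; rewrite eq_sym. Qed.

Lemma ae_eq_trans {u v w} : Defs.ae_eq u v -> Defs.ae_eq v w -> Defs.ae_eq u w.
Proof.
move=> uv vw; apply: (negligibleS _ (negligibleU uv vw)) => t /= uw.
by have [utv|] := eqVneq (u t) (v t); [right; rewrite -utv | left].
Qed.

Lemma L2p0 : L2p (fun _ : R => (0 : 'rV[R]_n)).
Proof.
split; last by apply: negligibleS (negligible_set0 _) => t /= [_]; rewrite eqxx.
split=> [i|]; first exact: measurable_cst.
rewrite (_ : (fun t => _) = fun _ => 0%E); first by rewrite integral0 ltry.
by apply/funext => t; rewrite /vsqnorm /vdot big1 // => i _; rewrite mxE mulr0.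
Qed.

Lemma L2ep0 : L2ep (fun _ : R => (0 : 'rV[R]_n)).
Proof.
move=> T _; rewrite (_ : trunc _ _ = fun _ => 0); first exact: L2p0.
by apply/funext => t; rewrite /trunc; case: ifP.
Qed.

Lemma trunc_ae_eq0 T u :
  Defs.ae_eq u (fun _ => 0) -> Defs.ae_eq (trunc T u) (fun _ => 0).
Proof.
by apply: negligibleS => t /=; rewrite /trunc; case: ifP => //; rewrite eqxx.
Qed.

End Signals.

Section Systems.
Context {R : realType} {n : nat} {P : signal R n -> signal R n}.

(* If P killed every finite-energy input, causality would make P u vanish on
   every [0, N] for every u in L_{2e+}, and P u also vanishes for t < 0. *)
Lemma causal_L2p_nonzero_image :
  causal P -> exists u, L2p u /\ ~ Defs.ae_eq (P u) (fun _ => 0).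
Proof.
move=> [[P_L2ep _ _ [u [u_L2ep Pu_neq0]]] P_causal].
apply: contrapT => /forallNP P_L2p0; apply: Pu_neq0.
have P_trunc0 (N : nat) : Defs.ae_eq (trunc N%:R (P u)) (fun _ => 0).
  apply: ae_eq_trans (P_causal u u_L2ep N%:R (ler0n _ _)) _.
  apply: trunc_ae_eq0; apply: contrapT => Pu0.
  by apply: (P_L2p0 (trunc N%:R u)); split => //; apply: u_L2ep.
have Pu_neg0 := (P_L2ep u u_L2ep 0 (lexx _)).2.
apply: (negligibleS _ (negligibleU Pu_neg0 (negligible_bigcup P_trunc0))).
move=> t /= Put_neq0; have [t_lt0|t_ge0] := ltP t 0.
  by left; split => //; rewrite /trunc ltW.
by right; exists (Num.truncn t).+1 => //=; rewrite /trunc ltW // truncnS_gt.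
Qed.

Lemma stable_angle_domain_nonempty :
  stable P -> exists u, L2p u /\ norm2 u != 0 /\ norm2 (P u) != 0.
Proof.
move=> [P_causal [P_L2p _]]; have [[_ P_ae P0 _] _] := P_causal.
have [u [u_L2p Pu_neq0]] := causal_L2p_nonzero_image P_causal.
exists u; split=> //; split; apply/eqP => /norm2_eq0_ae; last first.
  by move=> /(_ (P_L2p u u_L2p).1).
move=> /(_ u_L2p.1) u0; apply: Pu_neq0; apply: ae_eq_trans P0.
exact: ae_eq_sym (P_ae _ _ L2ep0 (ae_eq_sym u0)).
Qed.

End Systems.

Theorem proposition4 (R : realType) (n : nat) (P : signal R n -> signal R n)
  (nu rho : nat -> R) :
  (0 < n)%N ->
  stable P ->
  (forall k, 0 < nu k) -> (forall k, 0 < rho k) ->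
  (forall k, nu k * rho k <= 1 / 4) ->
  (forall (tau : nat -> R) (a b : R),
      (forall k, 0 <= tau k) ->
      series tau @ \oo --> (1 : R) ->
      series (fun k => tau k * nu k) @ \oo --> (a : R) ->
      series (fun k => tau k * rho k) @ \oo --> (b : R) ->
      forall u, L2p u ->
        a * norm2 u ^+ 2 + b * norm2 (P u) ^+ 2 <= ip u (P u)) ->
  singular_angle P <= acos (2 * Num.sqrt (sup (range (fun k => nu k * rho k)))).
Proof.
move=> _ P_stable nu_gt0 rho_gt0 _ P_ineq.
have P_ineq_at k u : L2p u ->
    nu k * norm2 u ^+ 2 + rho k * norm2 (P u) ^+ 2 <= ip u (P u).
  apply: (P_ineq (fun j => (j == k)%:R)) => //; try exact: series_indicator.
  rewrite -(funext (fun j => mulr1 (j == k)%:R)).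
  exact: series_indicator (fun=> 1) k.
have cos_ge k : 2 * Num.sqrt (nu k * rho k) <= cos_singular_angle P.
  apply: lb_le_inf.
    have [u u_in] := stable_angle_domain_nonempty P_stable.
    by exists (ip u (P u) / (norm2 u * norm2 (P u))), u.
  move=> _ [u [u_L2p [u_neq0 Pu_neq0]] <-].
  rewrite ler_pdivlMr ?mulr_gt0 ?lt0r ?u_neq0 ?Pu_neq0 ?sqrtr_ge0 //.
  apply: le_trans (P_ineq_at k u u_L2p).
  exact: sqrtM_AMGM (ltW (nu_gt0 k)) (ltW (rho_gt0 k)).
rewrite /singular_angle; apply: acos_antitone.
  by apply: le_trans (mulr_ge0 _ (sqrtr_ge0 _)); rewrite ?lerN10.
rewrite mulrC -ler_pdivlMr //; apply: sqrt_sup_le => [|_ [k _ <-]].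
  by exists (nu 0%N * rho 0%N), 0%N.
by rewrite ler_pdivlMr // mulrC.
Qed.
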